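(* For every two finite simple graphs $G$ and $H$ without isolated vertices, $$\gamma_{tR}(G\times H)\le \min\{\omega(g)\omega(h)-2|A_2||B_2|\},$$ where the minimum is taken over all total Roman dominating functions $g=(A_0,A_1,A_2)$ on $G$ and $h=(B_0,B_1,B_2)$ on $H$.
   Context: For a graph $G$ without isolated vertices, a total Roman dominating function is a map $f:V(G)\to\{0,1,2\}$, written $f=(V_0,V_1,V_2)$ with $V_i=\{v:f(v)=i\}$, such that every vertex in $V_0$ has a neighbor in $V_2$ and the subgraph induced by $V_1\cup V_2$ has no isolated vertices. Its weight is $\omega(f)=\sum_v f(v)$; $\gamma_{tR}(G)$ is the minimum weight of a total Roman dominating function. The direct product $G\times H$ has vertex set $V(G)\times V(H)$, with $(g,h)(g',h')$ an edge iff $gg'\in E(G)$ and $hh'\in E(H)$. *)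

From mathcomp Require Import all_boot.
Set Implicit Arguments. Unset Strict Implicit. Unset Printing Implicit Defensive.

Definition simple_graph (V : finType) (e : rel V) : Prop :=
  symmetric e /\ irreflexive e.

Definition no_isolated (V : finType) (e : rel V) : Prop :=
  forall v : V, exists u : V, e v u.

Definition lab (V : finType) := {ffun V -> 'I_3}.

Definition Vi (V : finType) (f : lab V) (i : nat) : {set V} :=
  [set v | nat_of_ord (f v) == i].

Definition is_trdf (V : finType) (e : rel V) (f : lab V) : bool :=
  [forall v, (nat_of_ord (f v) == 0) ==> [exists u, e v u && (nat_of_ord (f u) == 2)]]
  && [forall v, (nat_of_ord (f v) != 0) ==> [exists u, e v u && (nat_of_ord (f u) != 0)]].

Definition weight (V : finType) (f : lab V) : nat := \sum_(v : V) nat_of_ord (f v).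

(* gamma_tR: minimum weight over all TRDFs (default 2|V| = weight of constant 2,
   which is a TRDF when there are no isolated vertices). *)
Definition gamma_tR (V : finType) (e : rel V) : nat :=
  \big[minn/(2 * #|V|)%N]_(f : lab V | is_trdf e f) weight f.

Definition direct_prod (V W : finType) (e1 : rel V) (e2 : rel W) : rel (V * W) :=
  fun x y => e1 x.1 y.1 && e2 x.2 y.2.

From mathcomp Require Import all_boot all_order.
Import Order.TTheory.

Set Implicit Arguments.
Unset Strict Implicit.
Unset Printing Implicit Defensive.

(* Given total Roman dominating functions g on G and h on H, the labeling
   (x, y) |-> min(2, g x * h y) of G x H is again one: a vertex labeled 0 has
   a factor labeled 0, hence a neighbour in that factor labeled 2, which paired
   with any positively labeled neighbour in the other factor gives a neighbour
   labeled 2; positive vertices pair positive neighbours.  Its weight differs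
   from w(g) w(h) only on A_2 x B_2, where it drops from 4 to 2. *)

Lemma gamma_tR_le_weight (V : finType) (e : rel V) (f : lab V) :
  is_trdf e f -> gamma_tR e <= weight f.
Proof. by move=> tf; rewrite -leEnat; exact: (bigmin_le_cond (T:=nat)). Qed.

Lemma card_Vi2 (V : finType) (f : lab V) :
  #|Vi f 2| = \sum_(v : V) (f v == 2 :> nat).
Proof. by rewrite /Vi -sum1dep_card big_mkcond. Qed.

Section TotalRomanDomination.

Variables (V : finType) (e : rel V) (f : lab V).

Lemma is_trdfP :
  reflect ((forall v, f v = 0 :> nat -> exists2 u, e v u & f u = 2 :> nat) /\
           (forall v, f v != 0 :> nat -> exists2 u, e v u & f u != 0 :> nat))
          (is_trdf e f).
Proof.
apply: (iffP andP) => [[/forallP f0 /forallP f1] | [f0 f1]]; split.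
- by move=> v /eqP /(implyP (f0 v)) /existsP [u /andP [evu /eqP fu]]; exists u.
- by move=> v /(implyP (f1 v)) /existsP [u /andP [evu fu]]; exists u.
- apply/forallP => v; apply/implyP => /eqP /f0 [u evu fu].
  by apply/existsP; exists u; rewrite evu fu.
- apply/forallP => v; apply/implyP => /f1 [u evu fu].
  by apply/existsP; exists u; rewrite evu fu.
Qed.

Lemma trdf_pos_neighbour : is_trdf e f -> forall v, exists2 u, e v u & 0 < f u.
Proof.
move=> /is_trdfP [f0 f1] v; have [/eqP fv | fv] := boolP (f v == 0 :> nat).
- by have [u evu fu] := f0 v fv; exists u; rewrite ?fu.
- by have [u evu fu] := f1 v fv; exists u; rewrite ?lt0n.
Qed.

End TotalRomanDomination.

Section ProductLabeling.

Variables (V W : finType) (g : lab V) (h : lab W).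

Definition prod_lab : lab (V * W)%type :=
  [ffun p => inord (minn 2 (g p.1 * h p.2))].

Lemma prod_labE p : prod_lab p = minn 2 (g p.1 * h p.2) :> nat.
Proof. by rewrite ffunE inordK // ltnS geq_minl. Qed.

Lemma is_trdf_prod_lab (eG : rel V) (eH : rel W) :
  is_trdf eG g -> is_trdf eH h -> is_trdf (direct_prod eG eH) prod_lab.
Proof.
move=> tg th; have /is_trdfP [g0 _] := tg; have /is_trdfP [h0 _] := th.
apply/is_trdfP; split=> -[x y]; rewrite prod_labE /=.
- move=> /eqP; rewrite -leqn0 geq_min /= leqn0 muln_eq0 => /orP [/eqP gx | /eqP hy].
  + have [x' ex gx'] := g0 x gx; have [y' ey hy'] := trdf_pos_neighbour th y.
    exists (x', y'); first by rewrite /direct_prod /= ex ey.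
    by rewrite prod_labE /= gx'; apply/minn_idPl; rewrite leq_pmulr.
  + have [y' ey hy'] := h0 y hy; have [x' ex gx'] := trdf_pos_neighbour tg x.
    exists (x', y'); first by rewrite /direct_prod /= ex ey.
    by rewrite prod_labE /= hy'; apply/minn_idPl; rewrite leq_pmull.
- move=> _; have [x' ex gx'] := trdf_pos_neighbour tg x.
  have [y' ey hy'] := trdf_pos_neighbour th y.
  exists (x', y'); first by rewrite /direct_prod /= ex ey.
  by rewrite prod_labE -lt0n leq_min muln_gt0 gx' hy'.
Qed.

Lemma minn2_mul_lab (a b : 'I_3) :
  minn 2 (a * b) + 2 * ((a == 2 :> nat) * (b == 2 :> nat)) = a * b.
Proof. by case: a b => [[|[|[|a]]] //= _] [[|[|[|b]]] //= _]. Qed.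

Lemma sum_mul_pair (F : V -> nat) (G : W -> nat) :
  (\sum_x F x) * (\sum_y G y) = \sum_(p : V * W) F p.1 * G p.2.
Proof. by rewrite big_distrlr pair_bigA. Qed.

Lemma weight_prod_lab :
  weight prod_lab + 2 * #|Vi g 2| * #|Vi h 2| = weight g * weight h.
Proof.
rewrite /weight !card_Vi2 -mulnA !sum_mul_pair big_distrr -big_split /=.
by apply: eq_bigr => -[x y] _; rewrite prod_labE minn2_mul_lab.
Qed.

End ProductLabeling.

Theorem mainTheorem3 (V W : finType) (eG : rel V) (eH : rel W) :
  simple_graph eG -> simple_graph eH ->
  no_isolated eG -> no_isolated eH ->
  forall (g : lab V) (h : lab W), is_trdf eG g -> is_trdf eH h ->
  gamma_tR (direct_prod eG eH) <= weight g * weight h - 2 * #|Vi g 2| * #|Vi h 2|.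
Proof.
move=> _ _ _ _ g h tg th.
rewrite -weight_prod_lab addnK.
exact/gamma_tR_le_weight/is_trdf_prod_lab.
Qed.
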